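(* Let $A,B\in\mathrm{SL}_2\mathbb{R}$ be noncommuting, with $\mathrm{tr}(A)=\mathrm{tr}(B)\ge2$, and assume that the pair $A,B$ is well oriented. Then the only optimal word is $ab$.
   Context: For a matrix $X$ of trace $\ge2$, $X\ne I$, its attracting/repelling fixed points in $\partial\mathcal{H}=\mathbb{P}^1\mathbb{R}$ (under the Möbius action) are denoted with $+$/$-$ superscripts ($\alpha^\pm$ for $A$, $\beta^\pm$ for $B$); if $X$ is parabolic both denote its unique fixed point. Coherent orientation: with $\partial\mathcal{H}$ cyclically ordered and $[\alpha,\beta]$ the closed counterclockwise interval from $\alpha$ to $\beta$, let $I^+=\{\alpha^+\}$ if $\alpha^+=\beta^+$, and otherwise the one of $[\alpha^+,\beta^+],[\beta^+,\alpha^+]$ mapped into itself by both $A$ and $B$ (if it exists); define $I^-$ likewise with $A^{-1},B^{-1},\alpha^-,\beta^-$; the pair $A,B$ is coherently oriented if both exist. The pair $A,B$ is well oriented if $A,B$ is coherently oriented but $A,B^{-1}$ is not. Words: $F_2^+$ is the free semigroup of nonempty words over $\{a,b\}$, $|w|$ the length, $\phi(a)=A,\phi(b)=B$, $[w]=\mathrm{tr}(\phi(w))$. Define $w\preceq u$ iff $[w^{|u|}]\le[u^{|w|}]$; $w$ is maximal if $u\preceq w$ for all $u$. A Lyndon word is one strictly smaller lexicographically ($a<b$) than each of its proper rotations. A complete set of optimal words is a set of pairwise distinct maximal Lyndon words such that every maximal word is a power of a rotation of one of them; it is unique if it exists, and its elements are the optimal words. *)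

From HB Require Import structures.
From mathcomp Require Import all_boot all_order all_algebra.
From mathcomp Require Import reals.
Set Implicit Arguments. Unset Strict Implicit. Unset Printing Implicit Defensive.
Import Order.TTheory GRing.Theory Num.Theory.
Local Open Scope ring_scope.

Section Defs.
Variable R : realType.

(* ---------- Projective line  P^1 R = R u {oo}:  Some x = [x:1], None = oo = [1:0] ---------- *)
Definition P1 := option R.

Definition p1vec (p : P1) : 'cV[R]_2 :=
  match p with
  | Some x => \col_i (if i == 0 then x else 1)
  | None => \col_i (if i == 0 then 1 else 0)
  end.

Definition mob (X : 'M[R]_2) (p : P1) : P1 :=
  let a := X 0 0 in let b := X 0 1 in let c := X 1 0 in let d := X 1 1 in
  match p with
  | Some x => if c * x + d == 0 then None else Some ((a * x + b) / (c * x + d))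
  | None => if c == 0 then None else Some (a / c)
  end.

(* p is the attracting fixed point of X (tr X >= 2, X <> I): the projectivized
   eigenvector for the eigenvalue >= 1 (for parabolic X this is its unique
   fixed point, eigenvalue 1). *)
Definition attr_fix (X : 'M[R]_2) (p : P1) : Prop :=
  exists l : R, 1 <= l /\ X *m p1vec p = l *: p1vec p.

Definition rep_fix (X : 'M[R]_2) (p : P1) : Prop :=
  exists l : R, 0 < l <= 1 /\ X *m p1vec p = l *: p1vec p.

(* closed counterclockwise interval [p, q] of P^1 R (orientation: increasing
   direction on R, passing through oo) *)
Definition ccint (p q : P1) : P1 -> bool :=
  match p, q with
  | Some x, Some y =>
      if x <= y then (fun z => match z with Some t => x <= t <= y | None => false end)
      else (fun z => match z with Some t => (x <= t) || (t <= y) | None => true end)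
  | None, Some y => fun z => match z with Some t => t <= y | None => true end
  | Some x, None => fun z => match z with Some t => x <= t | None => true end
  | None, None => fun z => z == None
  end.

Definition maps_into_itself (X : 'M[R]_2) (J : P1 -> bool) : Prop :=
  forall z, J z -> J (mob X z).

Definition I_exists (X Y : 'M[R]_2) (p q : P1) : Prop :=
  p = q \/
  (exists J, (J = ccint p q \/ J = ccint q p) /\
             maps_into_itself X J /\ maps_into_itself Y J).

Definition coherently_oriented (X Y : 'M[R]_2) : Prop :=
  (exists p q, attr_fix X p /\ attr_fix Y q /\ I_exists X Y p q) /\
  (exists p q, rep_fix X p /\ rep_fix Y q /\ I_exists (invmx X) (invmx Y) p q).

Definition well_oriented (A B : 'M[R]_2) : Prop :=
  coherently_oriented A B /\ ~ coherently_oriented A (invmx B).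

Definition word := seq bool.
Definition la : bool := false.
Definition lb : bool := true.

Definition phi (A B : 'M[R]_2) (w : word) : 'M[R]_2 :=
  foldr (fun l M => (if l then B else A) *m M) 1%:M w.

Definition wtr (A B : 'M[R]_2) (w : word) : R := \tr (phi A B w).

Definition wpow (w : word) (k : nat) : word := flatten (nseq k w).

Definition wle (A B : 'M[R]_2) (w u : word) : Prop :=
  wtr A B (wpow w (size u)) <= wtr A B (wpow u (size w)).

Definition maximal (A B : 'M[R]_2) (w : word) : Prop :=
  w <> [::] /\ forall u : word, u <> [::] -> wle A B u w.

End Defs.

Fixpoint lex_lt (s t : word) : bool :=
  match s, t with
  | [::], [::] => false
  | [::], _ :: _ => true
  | _ :: _, [::] => false
  | x :: s', y :: t' => (~~ x && y) || ((x == y) && lex_lt s' t')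
  end.

Definition lyndon (w : word) : Prop :=
  w <> [::] /\ forall k, (0 < k < size w)%N -> lex_lt w (rot k w).

(* S is a complete set of optimal words (as a set, pairwise distinctness is automatic) *)
Definition complete_optimal (R : realType) (A B : 'M[R]_2) (S : word -> Prop) : Prop :=
  (forall w, S w -> maximal A B w /\ lyndon w) /\
  (forall w, maximal A B w ->
     exists u r k, S u /\ (0 < k)%N /\ w = wpow (rot r u) k).

(* If tr (A B^-1) were at least 2, the attracting fixed points of A and B^-1, which carry the
   same eigenvalue because tr A = tr B, would bound an arc invariant under both maps, and so
   would the repelling ones: A, B^-1 would be coherently oriented.  Hence
   tr (A B) = tr A tr B - tr (A B^-1) > (tr A)^2 - 2, which lets us conjugate A and B
   simultaneously to [[l, c], [0, l^-1]] and [[l, 0], [c, l^-1]] with c > 0.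
   For these, the squared Frobenius norms of A and B both equal tr (A B) = m + m^-1, so both
   stretch vectors by at most sqrt m, and a product W of 2n letters satisfies
   |tr W| <= m^n + m^-n = tr ((A B)^n), that is [u^2] <= [(ab)^|u|].  The bound is strict
   when u^2 contains aa or bb, because A A and B B stretch strictly less than m; so the
   maximal words are the powers of ab and ba, and ab is the only Lyndon one among them. *)

From HB Require Import structures.
From mathcomp Require Import all_boot all_order all_algebra.
From mathcomp Require Import reals.
From mathcomp Require Import ring lra zify.
Import Order.TTheory GRing.Theory Num.Theory.
Local Open Scope ring_scope.
Set Implicit Arguments. Unset Strict Implicit. Unset Printing Implicit Defensive.

Section Mx2.
Variable R : comNzRingType.
Implicit Types (M N : 'M[R]_2) (u v w x : R * R).

Definition mx2 (a b c d : R) : 'M[R]_2 :=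
  \matrix_(i, j) if i == 0 then (if j == 0 then a else b) else (if j == 0 then c else d).

Lemma ord2P (i : 'I_2) : i = 0 \/ i = 1.
Proof. by case: i => [[|[|k]] Hk]; [left|right|by []]; exact/val_inj. Qed.

Lemma matrix2P M N :
  M 0 0 = N 0 0 -> M 0 1 = N 0 1 -> M 1 0 = N 1 0 -> M 1 1 = N 1 1 -> M = N.
Proof.
move=> e00 e01 e10 e11; apply/matrixP=> i j.
by case: (ord2P i) => ->; case: (ord2P j) => ->.
Qed.

Lemma ord0_2 : ord0 = 0 :> 'I_2. Proof. exact/val_inj. Qed.
Lemma lift0_2 : lift ord0 ord0 = 1 :> 'I_2. Proof. exact/val_inj. Qed.

Lemma mulmx2E m n (M : 'M[R]_(m, 2)) (N : 'M[R]_(2, n)) i j :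
  (M *m N) i j = M i 0 * N 0 j + M i 1 * N 1 j.
Proof. by rewrite !mxE !big_ord_recl big_ord0 addr0 lift0_2 ord0_2. Qed.

Lemma mxtrace2 M : \tr M = M 0 0 + M 1 1.
Proof. by rewrite /mxtrace !big_ord_recl big_ord0 addr0 lift0_2 ord0_2. Qed.

Lemma det2 M : \det M = M 0 0 * M 1 1 - M 0 1 * M 1 0.
Proof.
rewrite (expand_det_row _ 0) !big_ord_recl big_ord0 addr0 /cofactor !det_mx11 !mxE /=.
rewrite lift0_2 !ord0_2 (_ : lift _ _ = 0 :> 'I_2); last exact/val_inj.
by rewrite /bump /=; ring.
Qed.

Lemma mx2_sqr M : M *m M = \tr M *: M - \det M *: 1%:M.
Proof. by apply: matrix2P; rewrite !mulmx2E !mxE mxtrace2 det2 /=; ring. Qed.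

Definition mxv M u : R * R := (M 0 0 * u.1 + M 0 1 * u.2, M 1 0 * u.1 + M 1 1 * u.2).
Definition scalev (c : R) u : R * R := (c * u.1, c * u.2).
Definition comb2 (a : R) u (b : R) w : R * R := (a * u.1 + b * w.1, a * u.2 + b * w.2).
Definition cross u w : R := u.1 * w.2 - u.2 * w.1.
Definition eigvec M u (l : R) := mxv M u = scalev l u.

Lemma mxv_mul M N u : mxv (M *m N) u = mxv M (mxv N u).
Proof. by rewrite /mxv !mulmx2E /=; congr pair; ring. Qed.

Lemma mxv1 u : mxv 1%:M u = u.
Proof. by case: u => u1 u2; rewrite /mxv !mxE /=; congr pair; ring. Qed.

Lemma mxv_scale M c u : mxv M (scalev c u) = scalev c (mxv M u).
Proof. by rewrite /mxv /scalev /=; congr pair; ring. Qed.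

Lemma cross_scalel c u w : cross (scalev c u) w = c * cross u w.
Proof. by rewrite /cross /=; ring. Qed.

Lemma cross_scaler c u w : cross u (scalev c w) = c * cross u w.
Proof. by rewrite /cross /=; ring. Qed.

Lemma cross_anti u w : cross u w = - cross w u.
Proof. by rewrite /cross; ring. Qed.

Lemma crossvv u : cross u u = 0.
Proof. by rewrite /cross mulrC subrr. Qed.

Lemma cross_mxv M u w : cross (mxv M u) (mxv M w) = \det M * cross u w.
Proof. by rewrite det2 /cross /mxv /=; ring. Qed.

Lemma mxtrace_cross M u w : \tr M * cross u w = cross (mxv M u) w + cross u (mxv M w).
Proof. by rewrite mxtrace2 /cross /mxv /=; ring. Qed.

Lemma cross_mxv_expand M u v w x :
  cross v w * cross (mxv M u) x = cross u w * cross (mxv M v) x + cross v u * cross (mxv M w) x.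
Proof. by rewrite /cross /mxv /=; ring. Qed.

Lemma cross_mxv_expandr M u v w x :
  cross v w * cross x (mxv M u) = cross u w * cross x (mxv M v) + cross v u * cross x (mxv M w).
Proof. by rewrite /cross /mxv /=; ring. Qed.

Definition colmx2 u w : 'M[R]_2 := mx2 u.1 w.1 u.2 w.2.

Lemma det_colmx2 u w : \det (colmx2 u w) = cross u w.
Proof. by rewrite det2 !mxE /= /cross; ring. Qed.

Lemma mulmx_colmx2 M u w a b c d :
  mxv M u = comb2 a u c w -> mxv M w = comb2 b u d w ->
  M *m colmx2 u w = colmx2 u w *m mx2 a b c d.
Proof.
rewrite /mxv /comb2 => -[Mu1 Mu2] [Mw1 Mw2].
by apply: matrix2P; rewrite !mulmx2E !mxE /= ?Mu1 ?Mu2 ?Mw1 ?Mw2; ring.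
Qed.

End Mx2.

Section Mx2Field.
Variable R : fieldType.
Implicit Types (M N P : 'M[R]_2) (u v w x : R * R).

Lemma comb2_cross x v w :
  cross v w != 0 -> x = comb2 (cross x w / cross v w) v (cross v x / cross v w) w.
Proof. by case: x => x1 x2 vw; rewrite /comb2 /cross /=; congr pair; field; exact: vw. Qed.

Lemma scalevK c u : c != 0 -> scalev c^-1 (scalev c u) = u.
Proof. by case: u => u1 u2 c0; rewrite /scalev /=; congr pair; field; exact: c0. Qed.

Section Eigvec.
Variables (M : 'M[R]_2) (v : R * R) (l : R).
Hypotheses (detM : \det M = 1) (l_neq0 : l != 0) (Mv : eigvec M v l).

Lemma cross_eigvec_mxv x : cross v (mxv M x) = cross v x / l.
Proof.
apply: (mulfI l_neq0); rewrite -cross_scalel -Mv cross_mxv detM mul1r.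
by rewrite mulrC divfK.
Qed.

Lemma cross_mxv_eigvec x : cross (mxv M x) v = cross x v / l.
Proof. by rewrite cross_anti cross_eigvec_mxv [cross x v]cross_anti mulNr. Qed.

Lemma mxtrace_eigvec u : cross v u != 0 -> \tr M = l + l^-1.
Proof.
move=> vu; apply: (mulIf vu).
by rewrite mxtrace_cross Mv cross_scalel cross_eigvec_mxv; ring.
Qed.

Lemma eigvec_invmx : eigvec (invmx M) v l^-1.
Proof.
have uM : M \in unitmx by rewrite unitmxE detM unitr1.
have := congr1 (mxv (invmx M)) Mv.
rewrite -mxv_mul mulVmx // mxv1 mxv_scale => Minv_v.
by rewrite /eigvec {2}Minv_v scalevK.
Qed.

End Eigvec.

Lemma cross_mxv_decompl M v w l x : eigvec M v l -> cross v w != 0 ->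
  cross (mxv M x) w = l * cross x w + cross (mxv M w) w / cross v w * cross v x.
Proof.
move=> Mv vw; apply: (mulfI vw).
by rewrite cross_mxv_expand Mv cross_scalel; field; exact: vw.
Qed.

Lemma cross_mxv_decompr M v w l x : eigvec M w l -> cross v w != 0 ->
  cross v (mxv M x) = l * cross v x + cross v (mxv M v) / cross v w * cross x w.
Proof.
move=> Mw vw; apply: (mulfI vw).
by rewrite cross_mxv_expandr Mw cross_scaler; field; exact: vw.
Qed.

Lemma det_invmx1 M : \det M = 1 -> \det (invmx M) = 1.
Proof. by move=> detM; rewrite det_inv detM invr1. Qed.

Lemma add_invmx M : \det M = 1 -> M + invmx M = \tr M *: 1%:M.
Proof.
move=> detM; have uM : M \in unitmx by rewrite unitmxE detM unitr1.
have := congr1 (mulmx (invmx M)) (mx2_sqr M).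
rewrite mulKmx // mulmxBr -!scalemxAr mulVmx // detM scale1r mulmx1 => M_def.
by rewrite {1}M_def subrK.
Qed.

Lemma mxtrace_invmx M : \det M = 1 -> \tr (invmx M) = \tr M.
Proof.
move=> detM; apply: (addrI (\tr M)).
by rewrite -mxtraceD add_invmx // mxtraceZ mxtrace1 mulr_natr mulr2n.
Qed.

Lemma mxtrace_mul_add_invmx M N :
  \det N = 1 -> \tr (M *m N) + \tr (M *m invmx N) = \tr M * \tr N.
Proof.
by move=> detN; rewrite -mxtraceD -mulmxDr add_invmx // -scalemxAr mulmx1 mxtraceZ mulrC.
Qed.

Lemma mxtrace_invmx_mul M N : \det M = 1 -> \det N = 1 ->
  \tr (invmx M *m N) = \tr (M *m invmx N).
Proof.
move=> detM detN; rewrite mxtrace_mulC.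
apply: (addrI (\tr (N *m M))).
by rewrite mxtrace_mul_add_invmx // mxtrace_mulC mxtrace_mul_add_invmx // mulrC.
Qed.

Lemma mxtrace_conj M N P : P \in unitmx -> M *m P = P *m N -> \tr M = \tr N.
Proof.
move=> uP MP; have -> : M = P *m N *m invmx P by rewrite -MP mulmxK.
by rewrite mxtrace_mulC mulKmx.
Qed.

End Mx2Field.

Section Triangularize.
Variables (R : fieldType) (A B : 'M[R]_2) (v w : R * R) (l : R).
Hypotheses (detA : \det A = 1) (detB : \det B = 1) (l_neq0 : l != 0).
Hypotheses (Av : eigvec A v l) (Bw : eigvec B w l^-1) (vw : cross v w != 0).

(* The coordinates in [A w = k v + l^-1 w] and [B v = l v + k' w]; rescaling [w] by [b]
   turns them into [b * k] and [k' / b]. *)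
Let k := cross (mxv A w) w / cross v w.
Let k' := cross v (mxv B v) / cross v w.

Lemma eigvec_pair_conj b : b != 0 ->
  A *m colmx2 v (scalev b w) = colmx2 v (scalev b w) *m mx2 l (b * k) 0 l^-1 /\
  B *m colmx2 v (scalev b w) = colmx2 v (scalev b w) *m mx2 l 0 (k' / b) l^-1.
Proof.
have li_neq0 : l^-1 != 0 by rewrite invr_eq0.
have Aw := comb2_cross (mxv A w) vw; rewrite (cross_eigvec_mxv detA l_neq0 Av) -/k in Aw.
have Bv := comb2_cross (mxv B v) vw; rewrite (cross_mxv_eigvec detB li_neq0 Bw) invrK -/k' in Bv.
move=> b_neq0; split; apply: mulmx_colmx2; rewrite ?mxv_scale ?Av ?Bw ?Aw ?Bv.
all: by rewrite /scalev /comb2 /=; congr pair; field; rewrite ?b_neq0 ?l_neq0 ?vw.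
Qed.

Lemma eigvec_pair_unitmx b : b != 0 -> colmx2 v (scalev b w) \in unitmx.
Proof. by move=> b_neq0; rewrite unitmxE det_colmx2 cross_scaler unitfE mulf_neq0. Qed.

Lemma eigvec_pair_mxtrace : \tr (A *m B) = l ^+ 2 + l^-1 ^+ 2 + k * k'.
Proof.
have [AP BP] := eigvec_pair_conj (oner_neq0 R).
have uP := eigvec_pair_unitmx (oner_neq0 R).
rewrite (@mxtrace_conj _ _ (mx2 l (1 * k) 0 l^-1 *m mx2 l 0 (k' / 1) l^-1) _ uP).
  by rewrite mxtrace2 !mulmx2E !mxE /=; field; rewrite l_neq0 oner_neq0.
by rewrite -mulmxA BP !mulmxA AP.
Qed.

End Triangularize.

Section RealMx2.
Variable R : realFieldType.
Implicit Types (M N W : 'M[R]_2) (x : R * R).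

Lemma add_inv_inj (l m : R) : 1 <= l -> 1 <= m -> l + l^-1 = m + m^-1 -> l = m.
Proof.
move=> l_ge1 m_ge1 e.
have : (l - m) * (l * m - 1) = 0.
  have -> : (l - m) * (l * m - 1) = l * m * ((l + l^-1) - (m + m^-1)).
    by field; apply/andP; split; apply/eqP; lra.
  by rewrite e subrr mulr0.
by move/eqP; rewrite mulf_eq0 => /orP[/eqP|/eqP]; nra.
Qed.

Lemma add_inv_ge2 (l : R) : 0 < l -> 2 <= l + l^-1.
Proof.
move=> l_gt0; rewrite -subr_ge0.
have -> : l + l^-1 - 2 = (l - 1) ^+ 2 / l by field; exact: lt0r_neq0.
by rewrite divr_ge0 ?sqr_ge0 // ltW.
Qed.

Lemma ltr_add_inv (a b : R) : 1 <= a -> 1 <= b -> (a + a^-1 < b + b^-1) = (a < b).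
Proof.
move=> a_ge1 b_ge1; rewrite -subr_gt0 -[a < b]subr_gt0.
have -> : b + b^-1 - (a + a^-1) = (b - a) * ((a * b - 1) / (a * b)).
  by field; apply/andP; split; apply/eqP; lra.
have [ab_gt1|ab_le1] := ltrP 1 (a * b).
  by rewrite pmulr_lgt0 // divr_gt0 ?subr_gt0 //; nra.
have [-> ->] : a = 1 /\ b = 1 by split; nra.
by rewrite !subrr mul0r ltxx.
Qed.

Definition sqfrob M : R := M 0 0 ^+ 2 + M 0 1 ^+ 2 + M 1 0 ^+ 2 + M 1 1 ^+ 2.
Definition sqnorm x : R := x.1 ^+ 2 + x.2 ^+ 2.
Definition sqnorm_le M (s : R) := forall x, sqnorm (mxv M x) <= s * sqnorm x.

Lemma sqnorm_ge0 x : 0 <= sqnorm x.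
Proof. by rewrite addr_ge0 ?sqr_ge0. Qed.

Lemma sqnorm_le_mul M N s s' :
  0 <= s -> sqnorm_le M s -> sqnorm_le N s' -> sqnorm_le (M *m N) (s * s').
Proof.
move=> s_ge0 hM hN x; rewrite mxv_mul -mulrA.
by apply: (le_trans (hM _)); rewrite ler_wpM2l.
Qed.

Lemma sqnorm_le_trans M s s' : s <= s' -> sqnorm_le M s -> sqnorm_le M s'.
Proof. by move=> ss' hM x; apply: (le_trans (hM x)); rewrite ler_wpM2r ?sqnorm_ge0. Qed.

Lemma sqnorm_le1 : sqnorm_le 1%:M 1.
Proof. by move=> x; rewrite mxv1 mul1r. Qed.

Lemma sqr_mxtrace_le_sqfrob M : \det M = 1 -> \tr M ^+ 2 <= sqfrob M + 2.
Proof.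
move=> detM; rewrite -subr_ge0.
have -> : sqfrob M + 2 - \tr M ^+ 2 = (M 0 1 - M 1 0) ^+ 2 + 2 * (1 - \det M).
  by rewrite /sqfrob mxtrace2 det2; ring.
by rewrite detM subrr mulr0 addr0 sqr_ge0.
Qed.

Lemma sqfrob_ge2 M : \det M = 1 -> 2 <= sqfrob M.
Proof.
move=> detM; rewrite -subr_ge0.
have -> : sqfrob M - 2 = (M 0 0 - M 1 1) ^+ 2 + (M 0 1 + M 1 0) ^+ 2 + 2 * (\det M - 1).
  by rewrite /sqfrob det2; ring.
by rewrite detM subrr mulr0 addr0 addr_ge0 ?sqr_ge0.
Qed.

Lemma psd2P (a b c : R) :
  (forall x y : R, 0 <= a * x ^+ 2 + 2 * b * x * y + c * y ^+ 2) <->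
  0 <= a + c /\ b ^+ 2 <= a * c.
Proof.
split=> [q_ge0|[ac_ge0 b_le] x y].
  have := q_ge0 1 0; have := q_ge0 0 1; rewrite !(expr1n, expr0n) /= => c_ge0 a_ge0.
  split; first lra.
  have : 0 <= (a + c) * (a * c - b ^+ 2) by have := q_ge0 b (- a); have := q_ge0 c (- b); nra.
  have [ac_gt0|ac_le0] := ltrP 0 (a + c); first by rewrite pmulr_rge0 // subr_ge0.
  have [a0 c0] : a = 0 /\ c = 0 by lra.
  by have := q_ge0 1 1; have := q_ge0 1 (- 1); rewrite a0 c0; nra.
have e : (a + c) * (a * x ^+ 2 + 2 * b * x * y + c * y ^+ 2) =
  (a * x + b * y) ^+ 2 + (b * x + c * y) ^+ 2 + (a * c - b ^+ 2) * (x ^+ 2 + y ^+ 2) by ring.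
have [ac_gt0|ac_le0] := ltrP 0 (a + c).
  rewrite -(pmulr_rge0 _ ac_gt0) e.
  have : 0 <= (a * c - b ^+ 2) * (x ^+ 2 + y ^+ 2) by rewrite mulr_ge0 ?subr_ge0 ?addr_ge0 ?sqr_ge0.
  by have := sqr_ge0 (a * x + b * y); have := sqr_ge0 (b * x + c * y); lra.
have [a0 c0] : a = 0 /\ c = 0 by nra.
have b0 : b = 0 by apply/eqP; rewrite -sqrf_eq0 eq_le sqr_ge0 andbT; move: b_le; rewrite a0 mul0r.
by rewrite a0 b0 c0 !(mul0r, mulr0) !addr0.
Qed.

Lemma sqnorm_leP M s : sqnorm_le M s <->
  0 <= 2 * s - sqfrob M /\ 0 <= s ^+ 2 - s * sqfrob M + \det M ^+ 2.
Proof.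
(* [s - M^T M] is positive semidefinite iff its trace and determinant are nonnegative. *)
set a := s - (M 0 0 ^+ 2 + M 1 0 ^+ 2); set c := s - (M 0 1 ^+ 2 + M 1 1 ^+ 2).
set b := - (M 0 0 * M 0 1 + M 1 0 * M 1 1).
have gap x : s * sqnorm x - sqnorm (mxv M x) = a * x.1 ^+ 2 + 2 * b * x.1 * x.2 + c * x.2 ^+ 2.
  by rewrite /a /b /c /sqnorm /mxv /=; ring.
have -> : 2 * s - sqfrob M = a + c by rewrite /a /c /sqfrob; ring.
have -> : s ^+ 2 - s * sqfrob M + \det M ^+ 2 = a * c - b ^+ 2.
  by rewrite /a /b /c /sqfrob det2; ring.
rewrite subr_ge0 -psd2P; split=> [hM x y | hM x].
  by have := hM (x, y); rewrite -subr_ge0 gap.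
by rewrite -subr_ge0 gap; apply: hM.
Qed.

Lemma sqnorm_le_sqfrob M s : \det M = 1 -> 1 <= s -> sqfrob M <= s + s^-1 -> sqnorm_le M s.
Proof.
move=> detM s_ge1 hF; apply/sqnorm_leP; rewrite detM expr1n.
have s_gt0 : 0 < s by lra.
have : s^-1 <= 1 by rewrite invf_le1.
have -> : s ^+ 2 - s * sqfrob M + 1 = s * (s + s^-1 - sqfrob M) by field; rewrite gt_eqF.
by split; [lra | apply: mulr_ge0; lra].
Qed.

Lemma sqfrob_le_sqnorm M s : \det M = 1 -> 0 < s -> sqnorm_le M s -> sqfrob M <= s + s^-1.
Proof.
move=> detM s_gt0 /sqnorm_leP[_]; rewrite detM expr1n.
have -> : s ^+ 2 - s * sqfrob M + 1 = s * (s + s^-1 - sqfrob M) by field; rewrite gt_eqF.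
by rewrite pmulr_rge0 // subr_ge0.
Qed.

Lemma mxtrace_le_sqnorm W a : \det W = 1 -> 0 < a -> sqnorm_le W (a ^+ 2) -> \tr W <= a + a^-1.
Proof.
move=> detW a_gt0 hW.
have : \tr W ^+ 2 <= (a + a^-1) ^+ 2.
  apply: (le_trans (sqr_mxtrace_le_sqfrob detW)).
  have -> : (a + a^-1) ^+ 2 = a ^+ 2 + (a ^+ 2)^-1 + 2 by field; exact: lt0r_neq0.
  by rewrite lerD2r sqfrob_le_sqnorm // exprn_gt0.
have : 0 < a + a^-1 by rewrite addr_gt0 ?invr_gt0.
nra.
Qed.

Lemma mxtrace_lt_sqnorm W a s :
  \det W = 1 -> 1 < a -> s < a ^+ 2 -> sqnorm_le W s -> \tr W < a + a^-1.
Proof.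
move=> detW a_gt1 s_lt hW; have a2_gt1 : 1 < a ^+ 2 by rewrite exprn_egt1.
have : \tr W ^+ 2 < (a + a^-1) ^+ 2.
  apply: (le_lt_trans (sqr_mxtrace_le_sqfrob detW)).
  have -> : (a + a^-1) ^+ 2 = a ^+ 2 + (a ^+ 2)^-1 + 2 by field; rewrite gt_eqF //; lra.
  rewrite ltrD2r; have [s_ge1|s_lt1] := lerP 1 s.
    by apply: le_lt_trans (sqfrob_le_sqnorm detW _ hW) _; rewrite ?ltr_add_inv //; lra.
  apply: le_lt_trans (sqfrob_le_sqnorm detW ltr01 (sqnorm_le_trans (ltW s_lt1) hW)) _.
  by rewrite ltr_add_inv //; lra.
have : 0 < a + a^-1 by rewrite addr_gt0 ?invr_gt0 //; lra.
nra.
Qed.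

End RealMx2.

Lemma exists_add_inv (R : rcfType) (z : R) : 2 <= z -> exists2 m : R, 1 <= m & m + m^-1 = z.
Proof.
move=> z_ge2; set r := Num.sqrt (z ^+ 2 - 4).
have r_ge0 : 0 <= r := sqrtr_ge0 _.
have r2 : r ^+ 2 = z ^+ 2 - 4 by rewrite sqr_sqrtr //; nra.
exists ((z + r) / 2); first lra.
have m_neq0 : (z + r) / 2 != 0 by rewrite gt_eqF //; lra.
by apply: (mulfI m_neq0); rewrite mulrDr mulfV //; nra.
Qed.

Section ProjectiveLine.
Variable R : realType.
Implicit Types (p q z : P1 R) (A B C X : 'M[R]_2).

Definition hcoord p : R * R := if p is Some x then (x, 1) else (1, 0).

Lemma p1vecE p i : p1vec p i 0 = if i == 0 then (hcoord p).1 else (hcoord p).2.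
Proof. by case: p => [x|]; rewrite mxE. Qed.

Lemma p1vec_eigvecP X p l : X *m p1vec p = l *: p1vec p <-> eigvec X (hcoord p) l.
Proof.
split=> [Xp | [Xp0 Xp1]].
  have := congr1 (fun Y : 'cV[R]_2 => Y 0 0) Xp; have := congr1 (fun Y : 'cV[R]_2 => Y 1 0) Xp.
  by rewrite /= !mulmx2E !mxE !p1vecE /= => Xp1 Xp0; rewrite /eigvec /mxv Xp0 Xp1.
apply/matrixP=> i j; rewrite (ord1 j) mulmx2E !mxE !p1vecE /=.
by case: (ord2P i) => ->.
Qed.

Lemma attr_fix_eigvec X p : attr_fix X p -> exists2 l, 1 <= l & eigvec X (hcoord p) l.
Proof. by case=> l [l_ge1 /p1vec_eigvecP]; exists l. Qed.

Lemma cross_hcoord_eq0 p q : cross (hcoord p) (hcoord q) = 0 -> p = q.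
Proof.
by case: p => [x|]; case: q => [y|] //=; rewrite /cross /= => h; [congr Some | exfalso..]; lra.
Qed.

Lemma mxtrace_eigvec_hcoord X p l :
  \det X = 1 -> l != 0 -> eigvec X (hcoord p) l -> \tr X = l + l^-1.
Proof.
move=> detX l_neq0 Xp.
have p_perp : 0 < cross (hcoord p) (- (hcoord p).2, (hcoord p).1).
  by case: p {Xp} => [x|]; rewrite /cross /=; nra.
exact: (mxtrace_eigvec detX l_neq0 Xp (lt0r_neq0 p_perp)).
Qed.

Lemma mob_hcoord X z : \det X != 0 ->
  exists2 c, c != 0 & hcoord (mob X z) = scalev c (mxv X (hcoord z)).
Proof.
rewrite det2 => detX; case: z => [x|] /=; case: eqP => [den0|/eqP den_neq0] /=.
- have num_neq0 : X 0 0 * x + X 0 1 != 0.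
    apply: contra detX => /eqP num0; apply/eqP.
    have -> : X 1 1 = - (X 1 0 * x) by lra.
    have -> : X 0 1 = - (X 0 0 * x) by lra.
    ring.
  exists (X 0 0 * x + X 0 1)^-1; first by rewrite invr_eq0.
  by rewrite /scalev /mxv /= !mulr1 den0 mulr0 mulVf.
- exists (X 1 0 * x + X 1 1)^-1; first by rewrite invr_eq0.
  by rewrite /scalev /mxv /= !mulr1 mulVf // mulrC.
- have X00_neq0 : X 0 0 != 0 by apply: contra detX => /eqP X00; rewrite den0 X00; apply/eqP; ring.
  exists (X 0 0)^-1; first by rewrite invr_eq0.
  by rewrite /scalev /mxv /= !mulr1 !mulr0 !addr0 den0 mulVf // mulr0.
- exists (X 1 0)^-1; first by rewrite invr_eq0.
  by rewrite /scalev /mxv /= !mulr1 !mulr0 !addr0 mulVf // mulrC.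
Qed.

Lemma ccint_cross p q z : p != q ->
  ccint p q z =
  (cross (hcoord p) (hcoord q) * cross (hcoord p) (hcoord z) * cross (hcoord z) (hcoord q) <= 0).
Proof.
case: p q => [x|] [y|] //= pq; first last.
- by case: z => [t|]; rewrite /cross /=; [apply/idP/idP => h | apply/esym]; lra.
- by case: z => [t|]; rewrite /cross /=; [apply/idP/idP => h | apply/esym]; lra.
have xy : x != y by apply: contraNneq pq => ->.
case: ltgtP xy => // [x_lt_y | y_lt_x] _; case: z => [t|]; rewrite /cross /= ?(mulr1, mul1r).
- have -> : (x - y) * (x - t) * (t - y) = - ((y - x) * ((t - x) * (y - t))) by ring.
  rewrite oppr_le0 pmulr_rge0 ?subr_gt0 //.
  by apply/idP/idP => [/andP[] *|h]; [rewrite mulr_ge0 ?subr_ge0 | apply/andP; split; nra].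
- by apply/esym/negbTE; rewrite -ltNge; lra.
- have -> : (x - y) * (x - t) * (t - y) = (x - y) * ((x - t) * (t - y)) by ring.
  rewrite pmulr_rle0 ?subr_gt0 //.
  by apply/idP/idP => [/orP[]|]; [nra | nra | case: lerP => //= *; nra].
- by apply/esym; lra.
Qed.

Lemma ccint_cross_sign p q (s : R) : p != q -> s != 0 ->
  exists2 J, J = ccint p q \/ J = ccint q p &
    forall z, J z = (0 <= s * (cross (hcoord p) (hcoord z) * cross (hcoord z) (hcoord q))).
Proof.
move=> pq s_neq0; set d := cross (hcoord p) (hcoord q).
have d_neq0 : d != 0 by apply: contra pq => /eqP /cross_hcoord_eq0 ->.
have s2_gt0 : 0 < s ^+ 2 by rewrite exprn_even_gt0.
have [sd_lt0|sd_gt0] : s * d < 0 \/ 0 < s * d.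
  by case: ltgtP (mulf_neq0 s_neq0 d_neq0) => // *; [left|right].
- exists (ccint p q); first by left.
  move=> z; rewrite ccint_cross // -/d -(pmulr_rle0 _ s2_gt0).
  set a := cross _ (hcoord z); set b := cross (hcoord z) _.
  have -> : s ^+ 2 * (d * a * b) = (s * d) * (s * (a * b)) by ring.
  by rewrite nmulr_rle0.
exists (ccint q p); first by right.
move=> z; rewrite ccint_cross 1?eq_sym // -(pmulr_rle0 _ s2_gt0).
rewrite [cross (hcoord q) (hcoord p)]cross_anti [cross (hcoord q) _]cross_anti.
rewrite [cross _ (hcoord p)]cross_anti -/d.
set a := cross _ (hcoord z); set b := cross (hcoord z) _.
have -> : s ^+ 2 * (- d * - b * - a) = - ((s * d) * (s * (a * b))) by ring.
by rewrite oppr_le0 pmulr_rge0.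
Qed.

Lemma maps_into_itself_cross X v w (s : R) (J : P1 R -> bool) : \det X != 0 ->
  (forall z, J z = (0 <= s * (cross v (hcoord z) * cross (hcoord z) w))) ->
  (forall x, 0 <= s * (cross v x * cross x w) ->
     0 <= s * (cross v (mxv X x) * cross (mxv X x) w)) ->
  maps_into_itself X J.
Proof.
move=> detX JE hX z; rewrite !JE => /hX.
have [c c_neq0 ->] := mob_hcoord z detX; rewrite cross_scaler cross_scalel.
set a := cross v _; set b := cross _ w.
have -> : s * (c * a * (c * b)) = c ^+ 2 * (s * (a * b)) by ring.
by move=> h; rewrite mulr_ge0 ?sqr_ge0.
Qed.

Lemma I_exists_common_eigval A C p q l : \det A = 1 -> \det C = 1 -> 0 < l ->
  eigvec A (hcoord p) l -> eigvec C (hcoord q) l -> 2 <= \tr (A *m C) -> I_exists A C p q.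
Proof.
move=> detA detC l_gt0 Ap Cq trAC_ge2; have l_neq0 := lt0r_neq0 l_gt0.
set v := hcoord p in Ap *; set w := hcoord q in Cq *.
have [/cross_hcoord_eq0 -> | vw] := eqVneq (cross v w) 0; [by left | right].
have pq : p != q by apply: contra vw => /eqP pq; rewrite /v /w pq crossvv.
set k := cross (mxv A w) w / cross v w; set k' := cross v (mxv C v) / cross v w.
have Ax x : cross (mxv A x) w = l * cross x w + k * cross v x := cross_mxv_decompl x Ap vw.
have Cx x : cross v (mxv C x) = l * cross v x + k' * cross x w := cross_mxv_decompr x Cq vw.
have trAC : \tr (A *m C) = 2 + k * k'.
  apply: (mulIf vw); rewrite mxtrace_cross !mxv_mul Ax Cq mxv_scale cross_scaler.
  rewrite (cross_eigvec_mxv detA l_neq0 Ap) (cross_mxv_eigvec detC l_neq0 Cq) Cx crossvv.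
  by field.
(* [tr (A C) = 2 + k k'] gives [k] and [k'] a common sign [s]; both maps then preserve the
   sign of [s [v, z] [z, w]], which tells on which of the two arcs between [p] and [q] lies [z]. *)
pose s : R := if (0 <= k) && (0 <= k') then 1 else -1.
have s_neq0 : s != 0 by rewrite /s; case: ifP; rewrite ?oppr_eq0 oner_eq0.
have [sk_ge0 sk'_ge0] : 0 <= s * k /\ 0 <= s * k'.
  rewrite /s; case: ifP => [/andP[] | /negbT]; rewrite ?mul1r // negb_and -!ltNge.
  by case/orP=> ?; split; nra.
have [J J_ccint JE] := ccint_cross_sign pq s_neq0.
exists J; split=> //; split; apply: (maps_into_itself_cross _ JE) => [|x];
  rewrite ?detA ?detC ?oner_neq0 //.
  rewrite (cross_eigvec_mxv detA l_neq0 Ap) Ax => h.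
  have -> : s * (cross v x / l * (l * cross x w + k * cross v x)) =
            s * (cross v x * cross x w) + s * k * cross v x ^+ 2 / l by field.
  by rewrite addr_ge0 // divr_ge0 ?(ltW l_gt0) // mulr_ge0 // sqr_ge0.
rewrite (cross_mxv_eigvec detC l_neq0 Cq) Cx => h.
have -> : s * ((l * cross v x + k' * cross x w) * (cross x w / l)) =
          s * (cross v x * cross x w) + s * k' * cross x w ^+ 2 / l by field.
by rewrite addr_ge0 // divr_ge0 ?(ltW l_gt0) // mulr_ge0 // sqr_ge0.
Qed.

Lemma attr_fix_invmx X p : \det X = 1 -> rep_fix X p -> attr_fix (invmx X) p.
Proof.
move=> detX [l [/andP[l_gt0 l_le1] /p1vec_eigvecP Xp]].
exists l^-1; split; first by rewrite invf_ge1.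
exact/p1vec_eigvecP/(eigvec_invmx detX (lt0r_neq0 l_gt0) Xp).
Qed.

Lemma rep_fix_invmx X p : \det X = 1 -> attr_fix X p -> rep_fix (invmx X) p.
Proof.
move=> detX [l [l_ge1 /p1vec_eigvecP Xp]]; have l_gt0 : 0 < l by lra.
exists l^-1; split; first by rewrite invr_gt0 l_gt0 invf_le1.
exact/p1vec_eigvecP/(eigvec_invmx detX (lt0r_neq0 l_gt0) Xp).
Qed.

Lemma attr_fix_common_eigval A B p q : \det A = 1 -> \det B = 1 -> \tr A = \tr B ->
  attr_fix A p -> attr_fix B q ->
  exists2 l, 1 <= l & eigvec A (hcoord p) l /\ eigvec B (hcoord q) l.
Proof.
move=> detA detB trAB /attr_fix_eigvec[l l_ge1 Ap] /attr_fix_eigvec[m m_ge1 Bq].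
exists l => //; split=> //; suff -> : l = m by [].
apply: add_inv_inj => //.
rewrite -(mxtrace_eigvec_hcoord detA _ Ap) ?trAB ?(mxtrace_eigvec_hcoord detB _ Bq) //.
  by rewrite gt_eqF //; lra.
by rewrite gt_eqF //; lra.
Qed.

Lemma well_oriented_mxtrace_lt2 A B : \det A = 1 -> \det B = 1 -> \tr A = \tr B ->
  well_oriented A B -> \tr (A *m invmx B) < 2.
Proof.
move=> detA detB trAB [[[p1 [q1 [Ap1 [Bq1 _]]]] [p2 [q2 [Ap2 [Bq2 _]]]]] not_coh].
rewrite ltNge; apply/negP => trABi_ge2; apply: not_coh.
have detBi := det_invmx1 detB.
have Biq2 := attr_fix_invmx detB Bq2; have Aip2 := attr_fix_invmx detA Ap2.
split; [exists p1, q2 | exists p2, q1].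
  split=> //; split=> //.
  have trABi : \tr A = \tr (invmx B) by rewrite mxtrace_invmx.
  have [l l_ge1 [Ap Biq]] := attr_fix_common_eigval detA detBi trABi Ap1 Biq2.
  by apply: I_exists_common_eigval Ap Biq trABi_ge2 => //; lra.
split=> //; split; first exact: rep_fix_invmx.
rewrite invmxK; have detAi := det_invmx1 detA.
have trAiB : \tr (invmx A) = \tr B by rewrite mxtrace_invmx.
have [l l_ge1 [Aip Bq]] := attr_fix_common_eigval detAi detB trAiB Aip2 Bq1.
apply: I_exists_common_eigval Aip Bq _ => //; first lra.
by rewrite mxtrace_invmx_mul.
Qed.

Definition triu2 (l c : R) : 'M[R]_2 := mx2 l c 0 l^-1.
Definition tril2 (l c : R) : 'M[R]_2 := mx2 l 0 c l^-1.

Lemma cross_eigvec_inv_neq0 A B p q l : \det A = 1 -> \det B = 1 -> 0 < l ->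
  eigvec A (hcoord p) l -> eigvec B (hcoord q) l^-1 -> \tr (A *m B) != 2 ->
  cross (hcoord p) (hcoord q) != 0.
Proof.
move=> detA detB l_gt0 Ap Bq; apply: contra => /eqP /cross_hcoord_eq0 pq.
have ABp : eigvec (A *m B) (hcoord p) 1.
  rewrite /eigvec mxv_mul -pq in Bq *; rewrite Bq mxv_scale Ap.
  by case: (hcoord p) => x y; rewrite /scalev /=; congr pair; field; exact: lt0r_neq0.
have detAB : \det (A *m B) = 1 by rewrite det_mulmx detA detB mulr1.
by rewrite (mxtrace_eigvec_hcoord detAB (oner_neq0 R) ABp) invr1.
Qed.

Lemma sl2_normal_form A B p q l : \det A = 1 -> \det B = 1 -> 1 <= l ->
  eigvec A (hcoord p) l -> eigvec B (hcoord q) l^-1 -> (l + l^-1) ^+ 2 - 2 < \tr (A *m B) ->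
  exists P c, [/\ P \in unitmx, 0 < c, A *m P = P *m triu2 l c & B *m P = P *m tril2 l c].
Proof.
move=> detA detB l_ge1 Ap Bq trAB; have l_gt0 : 0 < l by lra.
have l_neq0 := lt0r_neq0 l_gt0.
have sq_ge2 : 2 <= (l + l^-1) ^+ 2 - 2 by have := add_inv_ge2 l_gt0; nra.
have vw : cross (hcoord p) (hcoord q) != 0.
  by apply: cross_eigvec_inv_neq0 Ap Bq _ => //; apply/eqP; lra.
have := eigvec_pair_mxtrace detA detB l_neq0 Ap Bq vw.
set k := _ / _; set k' := _ / _ => trAB_eq.
have kk_gt0 : 0 < k * k'.
  move: trAB; rewrite trAB_eq sqrrD mulfV //; lra.
have k_neq0 : k != 0 by apply: contraTneq kk_gt0 => ->; rewrite mul0r ltxx.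
pose c := Num.sqrt (k * k').
have c_gt0 : 0 < c by rewrite sqrtr_gt0.
have cc : c * c = k * k' by rewrite -expr2 sqr_sqrtr // ltW.
have b_neq0 : c / k != 0 by rewrite mulf_neq0 ?invr_eq0 // lt0r_neq0.
have [AP BP] := eigvec_pair_conj detA detB l_neq0 Ap Bq vw b_neq0.
exists (colmx2 (hcoord p) (scalev (c / k) (hcoord q))), c; split=> //.
- exact: eigvec_pair_unitmx.
- by rewrite AP /triu2 divfK.
rewrite BP /tril2; congr (_ *m mx2 _ _ _ _).
by rewrite invf_div mulrA [k' * k]mulrC -cc mulfK // lt0r_neq0.
Qed.

Lemma well_oriented_normal_form A B :
  \det A = 1 -> \det B = 1 -> \tr A = \tr B -> well_oriented A B ->
  exists P l c, [/\ P \in unitmx, 0 < l, 0 < c, A *m P = P *m triu2 l c & B *m P = P *m tril2 l c].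
Proof.
move=> detA detB trAB wo.
have trABi := well_oriented_mxtrace_lt2 detA detB trAB wo.
case: wo => -[[p [_ [Ap _]]] [_ [q [_ [Bq _]]]]] _.
have detBi := det_invmx1 detB.
have trABi' : \tr A = \tr (invmx B) by rewrite mxtrace_invmx.
have [l l_ge1 [Ap' Biq]] := attr_fix_common_eigval detA detBi trABi' Ap (attr_fix_invmx detB Bq).
have l_neq0 : l != 0 by rewrite gt_eqF //; lra.
have Bq' : eigvec B (hcoord q) l^-1.
  by rewrite -[B]invmxK; exact: (eigvec_invmx detBi l_neq0 Biq).
have trAB_gt : (l + l^-1) ^+ 2 - 2 < \tr (A *m B).
  have := mxtrace_mul_add_invmx A detB.
  by rewrite -trAB (mxtrace_eigvec_hcoord detA l_neq0 Ap') -expr2; lra.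
have [P [c [uP c_gt0 AP BP]]] := sl2_normal_form detA detB l_ge1 Ap' Bq' trAB_gt.
by exists P, l, c; split=> //; lra.
Qed.

End ProjectiveLine.

Section Words.
Implicit Types (u w : word) (c : bool).

Lemma wpowS w n : wpow w n.+1 = w ++ wpow w n. Proof. by []. Qed.

Lemma wpow2 w : wpow w 2 = w ++ w.
Proof. by rewrite /wpow /= cats0. Qed.

Lemma size_wpow w n : size (wpow w n) = (size w * n)%N.
Proof. by elim: n => [|n IHn]; rewrite ?muln0 // wpowS size_cat IHn mulnS. Qed.

Lemma wpow_catC w n : wpow w n ++ w = w ++ wpow w n.
Proof. by elim: n => [|n IHn] /=; rewrite ?cats0 // -catA IHn. Qed.

Lemma lex_lt_irr w : lex_lt w w = false.
Proof. by elim: w => [|x w IHw] //=; rewrite IHw eqxx andbF orbF; case: x. Qed.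

Lemma wpow_not_lyndon w k : size w = 2%N -> (1 < k)%N -> ~ lyndon (wpow w k).
Proof.
move=> w2 k_gt1.
have rot2 : rot 2 (wpow w k) = wpow w k.
  by case: k k_gt1 => [|k] // _; rewrite wpowS -{1}w2 rot_size_cat wpow_catC.
case=> _ /(_ 2%N); rewrite rot2 lex_lt_irr size_wpow w2 => lyn2.
by suff /lyn2 : (0 < 2 < 2 * k)%N by []; rewrite /=; lia.
Qed.

Fixpoint alt c n : word := if n is n'.+1 then c :: alt (~~ c) n' else [::].

Lemma alt_double c k : alt c k.*2 = wpow [:: c; ~~ c] k.
Proof. by elim: k c => [|k IHk] c //=; rewrite negbK IHk. Qed.

Lemma alt_doubleS c k : alt c k.*2.+1 = wpow [:: c; ~~ c] k ++ [:: c].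
Proof. by elim: k c => [|k IHk] c //=; rewrite negbK -(IHk c). Qed.

Lemma square_factor_or_alt u :
  (exists U1 U2 c, u = U1 ++ [:: c; c] ++ U2) \/ (exists c, u = alt c (size u)).
Proof.
elim: u => [|x u [[U1 [U2 [c ->]]] | [c u_alt]]]; first by right; exists false.
  by left; exists (x :: U1), U2, c.
case: u u_alt => [|y u] u_alt; first by right; exists x.
have [<-|xy] := eqVneq x y; first by left; exists [::], u, x.
right; exists x; case: u_alt => <- u_alt /=.
have nx : ~~ x = y by move: xy; case: (x); case: (y).
by rewrite nx -u_alt.
Qed.

Lemma square_factor_or_wpow u : u <> [::] ->
  (exists U1 U2 c, u ++ u = U1 ++ [:: c; c] ++ U2) \/
  (exists2 k, (0 < k)%N & u = wpow [:: la; lb] k \/ u = wpow [:: lb; la] k).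
Proof.
move=> u_neq0; have [[U1 [U2 [c u_sq]]] | [c u_alt]] := square_factor_or_alt u.
  by left; exists U1, (U2 ++ u), c; rewrite {1}u_sq -!catA.
have := odd_double_half (size u); set k := (size u)./2; case: odd => /= size_u.
  have u_eq : u = alt c k.*2.+1 by rewrite {1}u_alt -size_u.
  left; exists (wpow [:: c; ~~ c] k), (alt (~~ c) k.*2), c.
  by rewrite {1}u_eq alt_doubleS u_eq -catA.
right; exists k.
  by rewrite lt0n; apply: contra_notN u_neq0 => /eqP k0; rewrite u_alt -size_u k0.
by rewrite u_alt -size_u alt_double; case: c {u_alt}; [right | left].
Qed.

Lemma complete_optimal_ab (R : realType) (A B : 'M[R]_2) :
  maximal A B [:: la; lb] ->
  (forall w, maximal A B w ->
     exists2 k, (0 < k)%N & w = wpow [:: la; lb] k \/ w = wpow [:: lb; la] k) ->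
  forall S : word -> Prop, complete_optimal A B S <-> (forall w, S w <-> w = [:: la; lb]).
Proof.
move=> max_ab max_wpow.
have lyn_ab : lyndon [:: la; lb] by split=> // -[|[|k]].
have lyn_max w : maximal A B w -> lyndon w -> w = [:: la; lb].
  move=> /max_wpow[[|[|k]] // _ [->|->]] lyn_w //.
  - by case: lyn_w => _ /(_ 1%N isT).
  - by case: (@wpow_not_lyndon [:: la; lb] k.+2 erefl isT lyn_w).
  - by case: (@wpow_not_lyndon [:: lb; la] k.+2 erefl isT lyn_w).
move=> S; split=> [[S_opt S_cover] w | S_ab].
  split=> [/S_opt[]|->]; first exact: lyn_max.
  have [u [r [k [Su _]]]] := S_cover _ max_ab.
  by have [max_u lyn_u] := S_opt u Su; rewrite -(lyn_max u max_u lyn_u).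
split=> [w /S_ab -> // | w /max_wpow[k k_gt0 [->|->]]].
  by exists [:: la; lb], 0%N, k; rewrite S_ab.
by exists [:: la; lb], 1%N, k; rewrite S_ab.
Qed.

End Words.

Section WordMatrices.
Variable R : realType.
Implicit Types (A B P : 'M[R]_2) (u w : word).

Lemma phi_cat A B u w : phi A B (u ++ w) = phi A B u *m phi A B w.
Proof. by elim: u => [|x u IHu] /=; rewrite ?mul1mx // IHu mulmxA. Qed.

Lemma det_phi A B w : \det A = 1 -> \det B = 1 -> \det (phi A B w) = 1.
Proof.
move=> detA detB; elim: w => [|x w IHw] /=; first by rewrite det1.
by rewrite det_mulmx IHw mulr1; case: x.
Qed.

Lemma sqnorm_le_phi A B w s : 0 <= s -> sqnorm_le A s -> sqnorm_le B s ->
  sqnorm_le (phi A B w) (s ^+ size w).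
Proof.
move=> s_ge0 hA hB; elim: w => [|x w IHw] /=; first by rewrite expr0; exact: sqnorm_le1.
by rewrite exprS; apply: sqnorm_le_mul => //; case: x.
Qed.

Lemma wtr_wpow A B w (m : R) n :
  \det (phi A B w) = 1 -> wtr A B w = m + m^-1 -> m != 0 ->
  wtr A B (wpow w n) = m ^+ n + m^-1 ^+ n.
Proof.
rewrite /wtr => detW trW m_neq0; set W := phi A B w in detW trW.
have phiS k : phi A B (wpow w k.+1) = W *m phi A B (wpow w k) by rewrite wpowS phi_cat.
suff /(_ n)[] : forall k, \tr (phi A B (wpow w k)) = m ^+ k + m^-1 ^+ k /\
                  \tr (phi A B (wpow w k.+1)) = m ^+ k.+1 + m^-1 ^+ k.+1 by [].
elim=> [|k [IHk IHk1]].
  by rewrite phiS /= mulmx1 mxtrace1 trW; split; ring.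
split=> //; rewrite phiS phiS mulmxA mx2_sqr mulmxBl -scalemxAl -phiS detW scale1r mul1mx.
by rewrite raddfB /= mxtraceZ IHk IHk1 trW !exprS; field.
Qed.

Lemma phi_conj A B A' B' P w : A *m P = P *m A' -> B *m P = P *m B' ->
  phi A B w *m P = P *m phi A' B' w.
Proof.
move=> AP BP; elim: w => [|x w IHw] /=; first by rewrite mul1mx mulmx1.
by rewrite -mulmxA IHw !mulmxA; case: x; rewrite ?AP ?BP.
Qed.

Lemma maximal_conj A B A' B' P w : P \in unitmx -> A *m P = P *m A' -> B *m P = P *m B' ->
  maximal A B w <-> maximal A' B' w.
Proof.
move=> uP AP BP; have wtrE u : wtr A B u = wtr A' B' u.
  exact: mxtrace_conj uP (phi_conj u AP BP).
by rewrite /maximal /wle; split=> -[w_neq0 w_max]; split=> // u u_neq0;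
  [rewrite -!wtrE | rewrite !wtrE]; apply: w_max.
Qed.

Section Optimality.
Variables A B : 'M[R]_2.
Hypotheses (detA : \det A = 1) (detB : \det B = 1).
Hypotheses (sqfrobA : sqfrob A = \tr (A *m B)) (sqfrobB : sqfrob B = \tr (A *m B)).
Hypothesis trAB_gt2 : 2 < \tr (A *m B).
Hypotheses (sqfrobAA : sqfrob (A *m A) < \tr (A *m B) ^+ 2 - 2)
           (sqfrobBB : sqfrob (B *m B) < \tr (A *m B) ^+ 2 - 2).

Lemma gens_sqnorm_le mu : 1 <= mu -> mu + mu^-1 = \tr (A *m B) ->
  sqnorm_le A mu /\ sqnorm_le B mu.
Proof.
by move=> mu_ge1 mu_sum; split; apply: sqnorm_le_sqfrob; rewrite ?sqfrobA ?sqfrobB ?mu_sum.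
Qed.

Lemma wtr_wpow_ab mu n : mu != 0 -> mu + mu^-1 = \tr (A *m B) ->
  wtr A B (wpow [:: la; lb] n) = mu ^+ n + mu^-1 ^+ n.
Proof.
move=> mu_neq0 mu_sum; apply: wtr_wpow => //.
  by rewrite /= mulmx1 det_mulmx detA detB mulr1.
by rewrite /wtr /= mulmx1.
Qed.

Lemma wtr_sq_le_ab u : wtr A B (wpow u 2) <= wtr A B (wpow [:: la; lb] (size u)).
Proof.
have [mu mu_ge1 mu_sum] := exists_add_inv (ltW trAB_gt2).
have [hA hB] := gens_sqnorm_le mu_ge1 mu_sum.
have mu_gt0 : 0 < mu by lra.
rewrite (wtr_wpow_ab _ (lt0r_neq0 mu_gt0) mu_sum) exprVn.
have := sqnorm_le_phi (wpow u 2) (ltW mu_gt0) hA hB; rewrite size_wpow exprM.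
by apply: mxtrace_le_sqnorm; [exact: det_phi | rewrite exprn_gt0].
Qed.

Lemma wtr_sq_lt_ab u U1 U2 c : u ++ u = U1 ++ [:: c; c] ++ U2 ->
  wtr A B (wpow u 2) < wtr A B (wpow [:: la; lb] (size u)).
Proof.
move=> u_sq; have [mu mu_ge1 mu_sum] := exists_add_inv (ltW trAB_gt2).
have mu_gt1 : 1 < mu.
  rewrite lt_neqAle mu_ge1 andbT; apply/eqP => mu1.
  by move: trAB_gt2; rewrite -mu_sum -mu1 invr1; lra.
have mu_gt0 : 0 < mu by lra.
have [hA hB] := gens_sqnorm_le mu_ge1 mu_sum.
have detC : \det (phi A B [:: c; c]) = 1 := det_phi _ detA detB.
have sqfrobC : sqfrob (phi A B [:: c; c]) < mu ^+ 2 + (mu ^+ 2)^-1.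
  have -> : mu ^+ 2 + (mu ^+ 2)^-1 = \tr (A *m B) ^+ 2 - 2.
    by rewrite -mu_sum; field; exact: lt0r_neq0.
  by rewrite /= mulmx1; case: (c).
have [s s_ge1 s_sum] := exists_add_inv (sqfrob_ge2 detC).
have hC : sqnorm_le (phi A B [:: c; c]) s by apply: sqnorm_le_sqfrob; rewrite ?s_sum.
have s_lt : s < mu ^+ 2 by rewrite -(ltr_add_inv s_ge1) ?exprn_ege1 // s_sum.
have sizes : (size U1 + size U2 + 2 = size u * 2)%N.
  by rewrite -(size_wpow u 2) wpow2 u_sq !size_cat /=; lia.
have hW : sqnorm_le (phi A B (wpow u 2)) (mu ^+ size U1 * (s * mu ^+ size U2)).
  rewrite wpow2 u_sq !phi_cat.
  have hU w : sqnorm_le (phi A B w) (mu ^+ size w) := sqnorm_le_phi w (ltW mu_gt0) hA hB.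
  apply: sqnorm_le_mul (hU _) (sqnorm_le_mul _ hC (hU _)); first by rewrite exprn_ge0 // ltW.
  lra.
rewrite (wtr_wpow_ab _ (lt0r_neq0 mu_gt0) mu_sum) exprVn.
apply: mxtrace_lt_sqnorm hW; first exact: det_phi.
  by rewrite exprn_egt1 //; lia.
rewrite -exprM -sizes !exprD.
have -> : mu ^+ size U1 * (s * mu ^+ size U2) = mu ^+ size U1 * mu ^+ size U2 * s by ring.
by rewrite ltr_pM2l // mulr_gt0 // exprn_gt0.
Qed.

Lemma maximal_ab : maximal A B [:: la; lb].
Proof. by split=> // u _; apply: wtr_sq_le_ab. Qed.

Lemma maximal_wpow_ab w : maximal A B w ->
  exists2 k, (0 < k)%N & w = wpow [:: la; lb] k \/ w = wpow [:: lb; la] k.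
Proof.
case=> w_neq0 w_max.
have [[U1 [U2 [c w_sq]]] | //] := square_factor_or_wpow w_neq0.
by have := wtr_sq_lt_ab w_sq; rewrite ltNge (w_max [:: la; lb]).
Qed.

End Optimality.

Lemma maximal_triu2_tril2 (l c : R) : 0 < l -> 0 < c ->
  maximal (triu2 l c) (tril2 l c) [:: la; lb] /\
  (forall w, maximal (triu2 l c) (tril2 l c) w ->
     exists2 k, (0 < k)%N & w = wpow [:: la; lb] k \/ w = wpow [:: lb; la] k).
Proof.
move=> l_gt0 c_gt0; have l_neq0 := lt0r_neq0 l_gt0.
set A := triu2 l c; set B := tril2 l c.
have detA : \det A = 1 by rewrite det2 !mxE /=; field.
have detB : \det B = 1 by rewrite det2 !mxE /=; field.
have trAB : \tr (A *m B) = l ^+ 2 + l^-1 ^+ 2 + c ^+ 2.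
  by rewrite mxtrace2 !mulmx2E !mxE /=; field.
have sqfrobA : sqfrob A = \tr (A *m B) by rewrite trAB /sqfrob !mxE /=; ring.
have sqfrobB : sqfrob B = \tr (A *m B) by rewrite trAB /sqfrob !mxE /=; ring.
have trAB_gt2 : 2 < \tr (A *m B).
  have := add_inv_ge2 (exprn_gt0 2 l_gt0); rewrite trAB -exprVn.
  by have := exprn_gt0 2 c_gt0; lra.
have sqfrobAA : sqfrob (A *m A) < \tr (A *m B) ^+ 2 - 2.
  have -> : \tr (A *m B) ^+ 2 - 2 = sqfrob (A *m A) + c ^+ 2 * (l - l^-1) ^+ 2 + c ^+ 4.
    by rewrite trAB /sqfrob !mulmx2E !mxE /=; field.
  by have := exprn_gt0 4 c_gt0; have := sqr_ge0 (c * (l - l^-1)); rewrite exprMn; lra.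
have sqfrobBB : sqfrob (B *m B) < \tr (A *m B) ^+ 2 - 2.
  by rewrite (_ : sqfrob (B *m B) = sqfrob (A *m A)) // /sqfrob !mulmx2E !mxE /=; ring.
by split; [exact: maximal_ab | exact: maximal_wpow_ab].
Qed.

End WordMatrices.

Unset Implicit Arguments.
Set Strict Implicit.

Theorem theorem3p6 (R : realType) (A B : 'M[R]_2) :
  \det A = 1 -> \det B = 1 ->
  A *m B != B *m A ->
  \tr A = \tr B -> 2 <= \tr A ->
  well_oriented A B ->
  forall S : word -> Prop,
    complete_optimal A B S <-> (forall w, S w <-> w = [:: la; lb]).
Proof.
(* Non-commutativity and [2 <= tr A] follow from the other hypotheses. *)
move=> detA detB _ trAB _ wo.
have [P [l [c [uP l_gt0 c_gt0 AP BP]]]] := well_oriented_normal_form detA detB trAB wo.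
have [max_ab max_wpow] := maximal_triu2_tril2 l_gt0 c_gt0.
apply: complete_optimal_ab => [|w]; first exact/(maximal_conj _ uP AP BP).
by move/(maximal_conj _ uP AP BP); apply: max_wpow.
Qed.
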